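(* Let $\varphi_0\in\mathrm{Mon}_+$. There exist a vector field $v\in L^2([0,1],H^1_0([0,1]))$ and a Lagrangian flow $\varphi$ associated with $v$ such that $\varphi(0,x)=\varphi_0(x)$ for all $x\in[0,1]$, and $\varphi(1,x)=1/2$ for $0<x<1$, $\varphi(1,0)=0$, $\varphi(1,1)=1$.
   Context: $\mathrm{Mon}_+$ denotes the set of nondecreasing functions $f:[0,1]\to[0,1]$ with $f(0)=0$ and $f(1)=1$. Definition (Lagrangian flow): let $v\in L^1([0,1],C([0,1]))$. A map $\varphi:[0,1]\times[0,1]\to[0,1]$, $(t,x)\mapsto\varphi(t,x)$, is a Lagrangian flow associated with $v$ if (i) $x\mapsto\varphi(t,x)$ is nondecreasing for every $t$, and (ii) for every $x$ the map $t\mapsto\varphi(t,x)$ is absolutely continuous and $\varphi(t,x)-\varphi(s,x)=\int_s^t v(r,\varphi(r,x))\,dr$ for all $0\le s<t\le 1$. *)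

From HB Require Import structures.
From mathcomp Require Import all_boot all_order all_algebra.
From mathcomp Require Import all_classical all_reals all_analysis.
Set Implicit Arguments. Unset Strict Implicit. Unset Printing Implicit Defensive.
Import Order.TTheory GRing.Theory Num.Theory.
Import numFieldNormedType.Exports.
Local Open Scope classical_set_scope.
Local Open Scope ring_scope.

Section Defs.
Variable R : realType.
Let I01 : set R := `[0, 1].

Definition Mon_plus (f : R -> R) : Prop :=
  [/\ (forall x, 0 <= x <= 1 -> 0 <= f x <= 1),
      (forall x y, 0 <= x -> x <= y -> y <= 1 -> f x <= f y),
      f 0 = 0 & f 1 = 1].

Definition abs_cont01 (g : R -> R) : Prop :=
  forall eps : R, 0 < eps -> exists2 delta : R, 0 < delta &
    forall (n : nat) (a b : nat -> R),
      (forall i, (i < n)%N -> 0 <= a i /\ a i <= b i /\ b i <= 1) ->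
      (forall i j, (i < j < n)%N -> b i <= a j) ->
      \sum_(i < n) (b i - a i) < delta ->
      \sum_(i < n) `|g (b i) - g (a i)| < eps.

(* v belongs to L^2([0,1], H^1_0([0,1])): there is a jointly measurable
   w(t,y) = d_y v(t,y), square integrable on [0,1]^2, such that for every t,
   v(t,.) is the primitive of w(t,.) vanishing at 0 and at 1. *)
Definition L2_H10 (v : R -> R -> R) : Prop :=
  exists w : R -> R -> R,
  [/\ measurable_fun (I01 `*` I01) (fun p : R * R => w p.1 p.2),
      (\int[(@lebesgue_measure R) \x (@lebesgue_measure R)]_(p in I01 `*` I01)
          ((w p.1 p.2) ^+ 2)%:E < +oo)%E,
      (forall t, 0 <= t <= 1 ->
         (@lebesgue_measure R).-integrable `[0, 1] (fun y => (w t y)%:E)),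
      (forall t x, 0 <= t <= 1 -> 0 <= x <= 1 ->
         (v t x)%:E = (\int[@lebesgue_measure R]_(y in `[0%R, x]%classic) (w t y)%:E)%E) &
      (forall t, 0 <= t <= 1 -> v t 1 = 0)].

Definition lagrangian_flow (v : R -> R -> R) (phi : R -> R -> R) : Prop :=
  [/\ (forall t x, 0 <= t <= 1 -> 0 <= x <= 1 -> 0 <= phi t x <= 1),
      (forall t x y, 0 <= t <= 1 -> 0 <= x -> x <= y -> y <= 1 -> phi t x <= phi t y),
      (forall x, 0 <= x <= 1 -> abs_cont01 (fun t => phi t x)),
      (forall x, 0 <= x <= 1 ->
         (@lebesgue_measure R).-integrable `[0, 1] (fun r => (v r (phi r x))%:E)) &
      (forall x s t, 0 <= x <= 1 -> 0 <= s -> s < t -> t <= 1 ->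
         (phi t x - phi s x)%:E =
           (\int[@lebesgue_measure R]_(r in `[s, t]%classic) (v r (phi r x))%:E)%E)].

End Defs.

(* Transport is along the smoothstep s(t) = 3t^2 - 2t^3: the trajectory of x is
   (1 - s) phi0 x + s target x.  For 0 < x < 1 it lies in the band
   [s/2, 1 - s/2] and depends affinely on phi0 x, so the velocity can be taken
   affine of slope -s'/(1 - s) on the band and of slope s'/s on either side of
   it, which makes it vanish at 0 and 1.  Its squared H^1 norm
   s'^2/s + s'^2/(1 - s) stays bounded because s' = 6t(1 - t) vanishes at the
   endpoints as fast as the square roots of s and 1 - s. *)

From HB Require Import structures.
From mathcomp Require Import all_boot all_order all_algebra.
From mathcomp Require Import all_classical all_reals all_analysis.
From mathcomp Require Import measurable_realfun ring lra.
Import Order.TTheory GRing.Theory Num.Theory.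
Import numFieldNormedType.Exports.
Local Open Scope classical_set_scope.
Local Open Scope ring_scope.

Lemma measurable_invr (R : realType) : measurable_fun setT (@GRing.inv R).
Proof.
have -> : @GRing.inv R = fun x => if 0 <= x then x `^ (-1) else - ((- x) `^ (-1)).
  apply/funext => x; case: ifPn => [x0|]; first by rewrite powR_inv1.
  by rewrite -ltNge => x0; rewrite powR_inv1 ?invrN ?opprK // oppr_ge0 ltW.
apply: measurable_fun_ifT.
- exact: measurable_fun_ler.
- exact: measurable_powR.
- apply: measurableT_comp => //.
  exact: measurableT_comp (measurable_powR _) _.
Qed.

Section tonelli_bound.
Context {d1 d2 : measure_display} {T1 : measurableType d1} {T2 : measurableType d2}
  {R : realType} {m1 : {sigma_finite_measure set T1 -> \bar R}}
  {m2 : {sigma_finite_measure set T2 -> \bar R}}.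
Local Open Scope ereal_scope.

Lemma integral_setX_lty {A : set T1} {B : set T2} {f : T1 * T2 -> \bar R} (M : R) :
  measurable A -> measurable B -> m1 A < +oo ->
  measurable_fun setT f -> (forall p, 0 <= f p) -> (0 <= M)%R ->
  (forall x, A x -> \int[m2]_(y in B) f (x, y) <= M%:E) ->
  \int[m1 \x m2]_(p in A `*` B) f p < +oo.
Proof.
move=> mA mB m1A mf f0 M0 fAB.
have mAB : measurable (A `*` B) by exact: measurableX.
have mfAB : measurable_fun setT (f \_ (A `*` B)).
  by apply/(measurable_restrictT _ _).1 => //; exact: measurable_funS mf.
have fAB0 p : 0 <= (f \_ (A `*` B)) p by rewrite patchE; case: ifP.
rewrite integral_mkcond (@fubini_tonelli1 _ _ _ _ _ m1 m2 _ mfAB fAB0).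
apply: (@le_lt_trans _ _ (\int[m1]_x (M%:E * (\1_A x)%:E))).
  apply: ge0_le_integral => //.
  - by move=> x _; exact: integral_ge0.
  - exact: measurable_fun_fubini_tonelli_F.
  - by apply: measurable_funeM; exact/measurable_EFinP/measurable_indic.
  move=> x _; rewrite /fubini_F indicE.
  have [xA|xA] := boolP (x \in A); rewrite /= ?mule1 ?mule0.
    rewrite (eq_integral ((fun y => f (x, y)) \_ B)); last first.
      by move=> y _; rewrite !patchE in_setX xA.
    by rewrite -integral_mkcond; apply: fAB; rewrite -inE.
  rewrite (eq_integral (fun _ => 0)) ?integral0 // => y _.
  by rewrite patchE in_setX (negbTE xA).
rewrite ge0_integralZl_EFin //; last exact/measurable_EFinP/measurable_indic.
by rewrite integral_indic // setIT lte_mul_pinfty.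
Qed.

End tonelli_bound.

Section real_lemmas.
Context {R : realType}.
Local Notation mu := (@lebesgue_measure R).

Definition itv_len (a b : R) : R := if a < b then b - a else 0.

Lemma lebesgue_measure_cc (a b : R) : mu `[a, b] = (itv_len a b)%:E.
Proof.
rewrite [LHS](lebesgue_measure_itv `[a, b]) /= lte_fin /itv_len.
by case: ifP => // _; rewrite EFinB.
Qed.

Lemma itv_len_le (a b : R) : a <= b -> itv_len a b = b - a.
Proof.
rewrite /itv_len le_eqVlt => /orP[/eqP->|->] //.
by rewrite ltxx subrr.
Qed.

Lemma itv_len_ge (a b : R) : b <= a -> itv_len a b = 0.
Proof. by rewrite /itv_len leNgt => /negbTE->. Qed.

Lemma integrable_itv_cst (a x : R) : mu.-integrable `[0%R, x] (fun=> a%:E).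
Proof.
apply: (measurable_bounded_integrable (f := cst a)) => //.
  by rewrite /= lebesgue_measure_cc ltry.
exact: bounded_cst.
Qed.

Lemma integrable_itv_indic (b c d x : R) :
  mu.-integrable `[0%R, x] (fun y => (b * \1_`[c, d] y)%:E).
Proof.
rewrite (_ : (fun y => _) = (fun y => b%:E * (\1_`[c, d] y)%:E)%E); last first.
  by apply/funext => y; rewrite EFinM.
apply: integrableZl => //; apply: (@integrableS _ _ _ _ setT) => //.
exact: (@integrable_indic_itv R c d true false).
Qed.

Lemma integral_cst_add_indic (a b c d x : R) : 0 <= c -> 0 <= x ->
  (\int[mu]_(y in `[0%R, x]%classic) (a + b * \1_`[c, d] y)%:E
    = (a * x + b * itv_len c (Num.min x d))%:E)%E.
Proof.
move=> c0 x0.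
under eq_integral do rewrite EFinD.
rewrite integralD //; [|exact: integrable_itv_cst|exact: integrable_itv_indic].
under [X in (_ + X)%E]eq_integral do rewrite EFinM.
rewrite integral_cst // integralZl //; last first.
  apply: (@integrableS _ _ _ _ setT) => //.
  exact: (@integrable_indic_itv R c d true false).
rewrite integral_indic //.
have -> : `[c, d] `&` `[0%R, x] = `[c, Num.min x d]%classic :> set R.
  apply/seteqP; split => y /=; rewrite !in_itv /= le_min.
    by move=> [/andP[-> ->] /andP[_ ->]].
  by move=> /andP[cy /andP[yx yd]]; rewrite cy yd yx; split => //; lra.
rewrite -[X in (a%:E * X)%E]/(mu `[0%R, x]%classic).
rewrite -[X in (b%:E * X)%E]/(mu `[c, Num.min x d]%classic).
by rewrite !lebesgue_measure_cc itv_len_le // subr0 -EFinM -EFinD.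
Qed.

Lemma is_derive_continuous {F f : R -> R} :
  (forall x : R, is_derive x (1 : R) F (f x)) -> continuous F.
Proof.
move=> dF x; apply: differentiable_continuous; apply/derivable1_diffP.
exact: ex_derive.
Qed.

Lemma integral_itv_derive {F f : R -> R} {s t : R} : s < t ->
  (forall x : R, is_derive x (1 : R) F (f x)) -> continuous f ->
  (\int[mu]_(r in `[s, t]%classic) (f r)%:E = (F t - F s)%:E)%E.
Proof.
move=> st dF cf; have cF := is_derive_continuous dF.
rewrite EFinB (continuous_FTC2 (F := F) st) //.
- exact: continuous_subspaceT.
- split.
  + by move=> x _; exact: ex_derive.
  + by apply: cvg_at_right_filter; exact: cF.
  + by apply: cvg_at_left_filter; exact: cF.
- by move=> x _; rewrite derive1E; exact: derive_val.
Qed.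

Lemma lipschitz_abs_cont01 (g : R -> R) (L : R) : 0 < L ->
  (forall a b, 0 <= a -> a <= b -> b <= 1 -> `|g b - g a| <= L * (b - a)) ->
  abs_cont01 g.
Proof.
move=> L0 gL eps eps0; exists (eps / L); first exact: divr_gt0.
move=> n a b ab _ sum_lt.
apply: (le_lt_trans (y := \sum_(i < n) L * (b i - a i))).
  by apply: ler_sum => i _; have [? [? ?]] := ab i (ltn_ord i); exact: gL.
by rewrite -mulr_sumr -ltr_pdivlMl // mulrC.
Qed.

Lemma Mon_plus_convex {f g : R -> R} {l : R} :
  Mon_plus f -> Mon_plus g -> 0 <= l <= 1 ->
  Mon_plus (fun x => (1 - l) * f x + l * g x).
Proof.
move=> [f01 fmon f0 f1] [g01 gmon g0 g1] /andP[l0 l1]; split.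
- move=> x x01; have /andP[? ?] := f01 x x01; have /andP[? ?] := g01 x x01.
  apply/andP; split; nra.
- move=> x y x0 xy y1; have := fmon x y x0 xy y1; have := gmon x y x0 xy y1.
  nra.
- by rewrite f0 g0; ring.
- by rewrite f1 g1; ring.
Qed.

Lemma sqr_div_mul_le (d s K : R) : 0 <= s -> 0 <= K -> d ^+ 2 <= K * s ->
  (d / s) ^+ 2 * s <= K.
Proof.
move=> + K0 dK; rewrite le_eqVlt => /orP[/eqP<-|s0]; first by rewrite mulr0.
have -> : (d / s) ^+ 2 * s = d ^+ 2 / s by field; rewrite gt_eqF.
by rewrite ler_pdivrMr.
Qed.

Lemma divfK_sqr_le {d s K : R} : d ^+ 2 <= K * s -> d / s * s = d.
Proof.
have [->|s0] := eqVneq s 0; last by rewrite divfK.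
rewrite mulr0 => d0; apply/eqP; rewrite mulr0 eq_sym -sqrf_eq0 eq_le d0.
by rewrite sqr_ge0.
Qed.

End real_lemmas.

Section construction.
Context {R : realType}.
Local Notation mu := (@lebesgue_measure R).
Implicit Types t x y : R.

Definition smoothstep t : R := t ^+ 2 * (3 - 2 * t).
Definition dsmoothstep t : R := 6 * t * (1 - t).

Lemma smoothstep0 : smoothstep 0 = 0.
Proof. by rewrite /smoothstep expr0n mul0r. Qed.

Lemma smoothstep1 : smoothstep 1 = 1.
Proof. by rewrite /smoothstep expr1n mul1r; ring. Qed.

Lemma smoothstep01 t : 0 <= t <= 1 -> 0 <= smoothstep t <= 1.
Proof.
move=> /andP[t0 t1]; rewrite /smoothstep; apply/andP; split; first nra.
have : 0 <= (1 - t) ^+ 2 * (1 + 2 * t) by apply: mulr_ge0; rewrite ?sqr_ge0 //; lra.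
nra.
Qed.

Lemma smoothstep_lipschitz a b : 0 <= a -> a <= b -> b <= 1 ->
  `|smoothstep b - smoothstep a| <= 6 * (b - a).
Proof.
move=> a0 ab b1.
have -> : smoothstep b - smoothstep a
    = (b - a) * (3 * (a + b) - 2 * (a * a + a * b + b * b)).
  by rewrite /smoothstep; ring.
rewrite normrM ger0_norm ?subr_ge0 // mulrC ler_wpM2r ?subr_ge0 //.
by rewrite ler_norml; apply/andP; split; nra.
Qed.

Lemma sqr_dsmoothstep_le t : 0 <= t <= 1 -> dsmoothstep t ^+ 2 <= 12 * smoothstep t.
Proof.
move=> /andP[t0 t1]; rewrite /dsmoothstep /smoothstep.
have : 0 <= t ^+ 2 * (4 * t - 3 * t ^+ 2) by apply: mulr_ge0; rewrite ?sqr_ge0 //; nra.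
nra.
Qed.

Lemma sqr_dsmoothstep_leC t : 0 <= t <= 1 ->
  dsmoothstep t ^+ 2 <= 12 * (1 - smoothstep t).
Proof.
move=> /andP[t0 t1]; rewrite /dsmoothstep /smoothstep.
have : 0 <= (1 - t) ^+ 2 * (1 + 2 * t - 3 * t ^+ 2).
  by apply: mulr_ge0; rewrite ?sqr_ge0 //; nra.
nra.
Qed.

Lemma is_derive_smoothstep t : is_derive t (1 : R) smoothstep (dsmoothstep t).
Proof.
rewrite /smoothstep /dsmoothstep; apply: is_derive_eq.
by rewrite /GRing.scale /=; ring.
Qed.

Lemma is_derive_dsmoothstep t : is_derive t (1 : R) dsmoothstep (6 - 12 * t).
Proof.
rewrite /dsmoothstep; apply: is_derive_eq.
by rewrite /GRing.scale /=; ring.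
Qed.

(* The denominators vanish at t = 0 or t = 1, where x / 0 = 0 and so both slopes
   are 0, consistently with dsmoothstep vanishing there. *)
Definition outer_slope t : R := dsmoothstep t / smoothstep t.
Definition inner_slope t : R := - (dsmoothstep t / (1 - smoothstep t)).

Lemma outer_slopeK t : 0 <= t <= 1 -> outer_slope t * smoothstep t = dsmoothstep t.
Proof. by move=> t01; rewrite /outer_slope (divfK_sqr_le (sqr_dsmoothstep_le _ t01)). Qed.

Lemma inner_slopeK t : 0 <= t <= 1 ->
  inner_slope t * (1 - smoothstep t) = - dsmoothstep t.
Proof.
by move=> t01; rewrite /inner_slope mulNr (divfK_sqr_le (sqr_dsmoothstep_leC _ t01)).
Qed.

Lemma sqr_outer_slope_le t : 0 <= t <= 1 -> outer_slope t ^+ 2 * smoothstep t <= 12.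
Proof.
move=> t01; have /andP[s0 _] := smoothstep01 _ t01.
exact: sqr_div_mul_le (sqr_dsmoothstep_le _ t01).
Qed.

Lemma sqr_inner_slope_le t : 0 <= t <= 1 ->
  inner_slope t ^+ 2 * (1 - smoothstep t) <= 12.
Proof.
move=> t01; have /andP[_ s1] := smoothstep01 _ t01.
rewrite sqrrN; apply: sqr_div_mul_le (sqr_dsmoothstep_leC _ t01) => //.
by rewrite subr_ge0.
Qed.

Lemma measurable_smoothstep : measurable_fun setT smoothstep.
Proof.
apply: continuous_measurable_fun.
exact: is_derive_continuous is_derive_smoothstep.
Qed.

Lemma measurable_dsmoothstep : measurable_fun setT dsmoothstep.
Proof.
apply: continuous_measurable_fun.
exact: is_derive_continuous is_derive_dsmoothstep.
Qed.

Lemma measurable_outer_slope : measurable_fun setT outer_slope.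
Proof.
apply: measurable_funM; first exact: measurable_dsmoothstep.
exact: measurableT_comp (measurable_invr R) measurable_smoothstep.
Qed.

Lemma measurable_inner_slope : measurable_fun setT inner_slope.
Proof.
apply: measurableT_comp => //; apply: measurable_funM.
  exact: measurable_dsmoothstep.
apply: measurableT_comp (measurable_invr R) _.
exact: measurable_funB measurable_smoothstep.
Qed.

Definition band t : set R := `[smoothstep t / 2, 1 - smoothstep t / 2].

Definition velocity_dx t y : R :=
  outer_slope t + (inner_slope t - outer_slope t) * \1_(band t) y.

Definition velocity t x : R :=
  outer_slope t * x + (inner_slope t - outer_slope t)
    * itv_len (smoothstep t / 2) (Num.min x (1 - smoothstep t / 2)).

Lemma velocityE t x : 0 <= t <= 1 -> 0 <= x ->
  (velocity t x)%:E = (\int[mu]_(y in `[0%R, x]%classic) (velocity_dx t y)%:E)%E.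
Proof.
move=> t01 x0; have /andP[s0 _] := smoothstep01 _ t01.
by rewrite integral_cst_add_indic // divr_ge0.
Qed.

Lemma band_len t : 0 <= t <= 1 ->
  itv_len (smoothstep t / 2) (Num.min 1 (1 - smoothstep t / 2)) = 1 - smoothstep t.
Proof.
move=> t01; have /andP[s0 s1] := smoothstep01 _ t01.
rewrite (min_idPr _) ?itv_len_le; [lra|lra|lra].
Qed.

Lemma velocity_at0 t : 0 <= t <= 1 -> velocity t 0 = 0.
Proof.
move=> t01; have /andP[s0 s1] := smoothstep01 _ t01.
rewrite /velocity itv_len_ge ?mulr0 ?addr0 //.
by rewrite ge_min; apply/orP; left; lra.
Qed.

Lemma velocity_at1 t : 0 <= t <= 1 -> velocity t 1 = 0.
Proof.
move=> t01; rewrite /velocity band_len //.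
have := outer_slopeK _ t01; have := inner_slopeK _ t01; lra.
Qed.

Lemma velocity_band t a : 0 <= t <= 1 -> 0 <= a <= 1 ->
  velocity t ((1 - smoothstep t) * a + smoothstep t / 2)
    = dsmoothstep t * (1 / 2 - a).
Proof.
move=> t01 /andP[a0 a1]; have /andP[s0 s1] := smoothstep01 _ t01.
rewrite /velocity (min_idPl _); last by nra.
rewrite itv_len_le; last by nra.
have := outer_slopeK _ t01; have := inner_slopeK _ t01; nra.
Qed.

Lemma velocity_dxE t y : velocity_dx t y =
  if (smoothstep t / 2 <= y) && (y <= 1 - smoothstep t / 2)
  then inner_slope t else outer_slope t.
Proof.
rewrite /velocity_dx indicE /band mem_setE in_itv /=.
by case: ifP => _ /=; rewrite ?mulr1 ?mulr0 ?addr0 //; ring.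
Qed.

Lemma measurable_velocity_dx :
  measurable_fun setT (fun p : R * R => velocity_dx p.1 p.2).
Proof.
have ms : measurable_fun setT (fun p : R * R => smoothstep p.1 / 2).
  by apply: measurable_funM => //; exact: measurableT_comp measurable_smoothstep _.
under eq_fun do rewrite velocity_dxE.
apply: measurable_fun_ifT.
- apply: measurable_and; first exact: measurable_fun_ler ms measurable_snd.
  by apply: measurable_fun_ler => //; exact: measurable_funB.
- exact: measurableT_comp measurable_inner_slope measurable_fst.
- exact: measurableT_comp measurable_outer_slope measurable_fst.
Qed.

Lemma integral_sqr_velocity_dx_le t : 0 <= t <= 1 ->
  (\int[mu]_(y in `[0%R, 1%R]%classic) ((velocity_dx t y) ^+ 2)%:E <= 24%:E)%E.
Proof.
move=> t01; have /andP[s0 _] := smoothstep01 _ t01.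
have sqrE y : velocity_dx t y ^+ 2 = outer_slope t ^+ 2
    + (inner_slope t ^+ 2 - outer_slope t ^+ 2) * \1_(band t) y.
  by rewrite /velocity_dx indicE; case: (y \in _) => /=; ring.
under eq_integral do rewrite sqrE.
rewrite integral_cst_add_indic ?divr_ge0 // band_len // lee_fin.
have := sqr_outer_slope_le _ t01; have := sqr_inner_slope_le _ t01; lra.
Qed.

Lemma integrable_velocity_dx t :
  mu.-integrable `[0%R, 1%R] (fun y => (velocity_dx t y)%:E).
Proof.
apply: (eq_integrable _ _ _ _ (integrableD _
  (integrable_itv_cst (outer_slope t) 1)
  (integrable_itv_indic (inner_slope t - outer_slope t) (smoothstep t / 2)
    (1 - smoothstep t / 2) 1))); try exact: measurable_itv.
by move=> y _; rewrite /= EFinD.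
Qed.

Lemma L2_H10_velocity : L2_H10 velocity.
Proof.
exists velocity_dx; split.
- exact: measurable_funS measurable_velocity_dx.
- apply: (integral_setX_lty 24) => //.
  + by rewrite /= lebesgue_measure_cc ltry.
  + by apply/measurable_EFinP; exact: measurable_funX measurable_velocity_dx.
  + by move=> p; rewrite lee_fin sqr_ge0.
  + by move=> t; rewrite /= in_itv /=; exact: integral_sqr_velocity_dx_le.
- by move=> t _; exact: integrable_velocity_dx.
- by move=> t x t01 /andP[x0 _]; exact: velocityE.
- exact: velocity_at1.
Qed.

Definition target x : R := if x <= 0 then 0 else if 1 <= x then 1 else 1 / 2.

Lemma Mon_plus_target : Mon_plus target.
Proof.
split; rewrite /target.
- move=> x _.
  by case: (leP x 0) => _; last case: (leP 1 x) => _; apply/andP; split; lra.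
- move=> x y x0 xy y1.
  by case: (leP x 0); case: (leP 1 x); case: (leP y 0); case: (leP 1 y); lra.
- by rewrite lexx.
- by rewrite ler10 lexx.
Qed.

Definition flow (phi0 : R -> R) t x : R :=
  (1 - smoothstep t) * phi0 x + smoothstep t * target x.

Lemma flow0 phi0 x : flow phi0 0 x = phi0 x.
Proof. by rewrite /flow smoothstep0 subr0 mul1r mul0r addr0. Qed.

Lemma flow1 phi0 x : flow phi0 1 x = target x.
Proof. by rewrite /flow smoothstep1 subrr mul0r mul1r add0r. Qed.

Lemma is_derive_flow phi0 x t :
  is_derive t (1 : R) (flow phi0 ^~ x) (dsmoothstep t * (target x - phi0 x)).
Proof.
rewrite /flow /smoothstep /dsmoothstep; apply: is_derive_eq.
by rewrite /GRing.scale /=; ring.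
Qed.

Lemma velocity_flow phi0 t x : Mon_plus phi0 -> 0 <= t <= 1 -> 0 <= x <= 1 ->
  velocity t (flow phi0 t x) = dsmoothstep t * (target x - phi0 x).
Proof.
move=> [phi01 _ phi00 phi11] t01 /andP[x0 x1]; rewrite /flow /target.
have [->|xn0] := eqVneq x 0.
  by rewrite lexx phi00 !mulr0 addr0 velocity_at0 // subrr mulr0.
have [->|xn1] := eqVneq x 1.
  by rewrite ler10 lexx phi11 !mulr1 subrK velocity_at1 // subrr mulr0.
rewrite ifF; last by apply/negbTE; rewrite -ltNge lt_neqAle eq_sym xn0.
rewrite ifF; last by apply/negbTE; rewrite -ltNge lt_neqAle xn1.
rewrite div1r velocity_band ?div1r //; exact/phi01/andP.
Qed.

Lemma continuous_dsmoothstepMr c : continuous (fun r => dsmoothstep r * c).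
Proof.
move=> r; apply: continuousM; last exact: cst_continuous.
exact: (is_derive_continuous is_derive_dsmoothstep r).
Qed.

Lemma flow_increment phi0 x s t : Mon_plus phi0 -> 0 <= x <= 1 ->
  0 <= s -> s < t -> t <= 1 ->
  (flow phi0 t x - flow phi0 s x)%:E =
    (\int[mu]_(r in `[s, t]%classic) (velocity r (flow phi0 r x))%:E)%E.
Proof.
move=> phi0M x01 s0 st t1.
rewrite -(integral_itv_derive st (is_derive_flow phi0 x) (continuous_dsmoothstepMr _)).
apply: eq_integral => r; rewrite inE /= in_itv /= => /andP[sr rt].
by rewrite velocity_flow //; apply/andP; split; lra.
Qed.

Lemma lagrangian_flow_flow phi0 : Mon_plus phi0 -> lagrangian_flow velocity (flow phi0).
Proof.
move=> phi0M; have [phi01 _ _ _] := phi0M; split.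
- move=> t x /smoothstep01 s01.
  by have [conv01 _ _ _] := Mon_plus_convex phi0M Mon_plus_target s01; exact: conv01.
- move=> t x y /smoothstep01 s01.
  by have [_ conv_mono _ _] := Mon_plus_convex phi0M Mon_plus_target s01; exact: conv_mono.
- move=> x x01; apply: (@lipschitz_abs_cont01 _ _ 6) => // a b a0 ab b1.
  have [target01 _ _ _] := Mon_plus_target.
  have /andP[? ?] := phi01 x x01; have /andP[? ?] := target01 x x01.
  have -> : flow phi0 b x - flow phi0 a x
      = (smoothstep b - smoothstep a) * (target x - phi0 x) by rewrite /flow; ring.
  rewrite normrM -[leRHS]mulr1 ler_pM ?smoothstep_lipschitz //.
  by rewrite ler_norml; apply/andP; split; lra.
- move=> x x01.
  apply: (eq_integrable _ _ _ _ (continuous_compact_integrable _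
    (continuous_subspaceT (continuous_dsmoothstepMr (target x - phi0 x)))));
    try exact: measurable_itv; last exact: segment_compact.
  move=> r; rewrite inE /= in_itv /= => r01.
  by rewrite velocity_flow.
- by move=> x s t x01 s0 st t1; exact: flow_increment.
Qed.

End construction.

Theorem mainTheorem4 (R : realType) (phi0 : R -> R) :
  Mon_plus phi0 ->
  exists (v : R -> R -> R) (phi : R -> R -> R),
    [/\ L2_H10 v, lagrangian_flow v phi,
        (forall x, 0 <= x <= 1 -> phi 0 x = phi0 x),
        (forall x, 0 < x < 1 -> phi 1 x = 1 / 2) &
        (phi 1 0 = 0 /\ phi 1 1 = 1)].
Proof.
move=> phi0M; have [_ _ target0 target1] := @Mon_plus_target R.
exists velocity, (flow phi0); split.
- exact: L2_H10_velocity.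
- exact: lagrangian_flow_flow.
- by move=> x _; rewrite flow0.
- by move=> x /andP[x0 x1]; rewrite flow1 /target leNgt x0 leNgt x1.
- by rewrite !flow1.
Qed.
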